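(* There exists a unital, completely positive, idempotent linear map $\Phi:\ell^\infty(\mathbb Z)\to\ell^\infty(\mathbb Z)$ which is $\mathbb Z$-equivariant (i.e. $\Phi\circ B=B\circ\Phi$, where $(Bv)_n=v_{n+1}$ is the backward shift) and whose range is not a C*-subalgebra of $\ell^\infty(\mathbb Z)$.
   Context: $\ell^\infty(\mathbb Z)$ is the C*-algebra of bounded complex sequences indexed by $\mathbb Z$ with pointwise operations; $\mathbb Z$ acts on it by translation, generated by the backward shift $B$. *)

From HB Require Import structures.
From mathcomp Require Import all_boot all_order all_algebra.
From mathcomp Require Import complex.
From mathcomp Require Import reals.
Set Implicit Arguments. Unset Strict Implicit. Unset Printing Implicit Defensive.
Import Order.TTheory GRing.Theory Num.Theory.
Local Open Scope ring_scope.

Section Linf.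
Variable R : realType.
Notation C := (R[i])%C.

Definition seqZ := int -> C.

Definition bounded (v : seqZ) : Prop := exists M : R, forall n, `|v n| <= (M%:C)%C.

Definition sadd (u v : seqZ) : seqZ := fun n => u n + v n.
Definition sscale (a : C) (v : seqZ) : seqZ := fun n => a * v n.
Definition smul (u v : seqZ) : seqZ := fun n => u n * v n.
Definition sstar (v : seqZ) : seqZ := fun n => conjc (v n).
Definition sone : seqZ := fun _ => 1.

Definition bshift (v : seqZ) : seqZ := fun n => v (n + 1).

Definition unif_cvg (w : nat -> seqZ) (v : seqZ) : Prop :=
  forall eps : R, 0 < eps -> exists K : nat, forall k, (K <= k)%N ->
    forall n, `|w k n - v n| <= (eps%:C)%C.

Definition is_Cstar_subalgebra (S : seqZ -> Prop) : Prop :=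
  (forall v, S v -> bounded v) /\
  S (fun _ => 0) /\
  (forall u v, S u -> S v -> S (sadd u v)) /\
  (forall a v, S v -> S (sscale a v)) /\
  (forall u v, S u -> S v -> S (smul u v)) /\
  (forall v, S v -> S (sstar v)) /\
  (forall w v, (forall k, S (w k)) -> bounded v -> unif_cvg w v -> S v).

Definition mx_positive (n : nat) (A : 'I_n -> 'I_n -> seqZ) : Prop :=
  exists B : 'I_n -> 'I_n -> seqZ,
    (forall i j, bounded (B i j)) /\
    forall i j k, A i j k = \sum_(l < n) (conjc (B l i k) * B l j k).

(* Hypotheses on a map Phi : l^oo(Z) -> l^oo(Z), encoded as a function on all
   sequences whose behaviour is only constrained on bounded ones. *)
Definition maps_linf (Phi : seqZ -> seqZ) : Prop :=
  forall v, bounded v -> bounded (Phi v).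

Definition is_linear_linf (Phi : seqZ -> seqZ) : Prop :=
  forall a u v, bounded u -> bounded v ->
    Phi (sadd (sscale a u) v) = sadd (sscale a (Phi u)) (Phi v).

Definition is_unital (Phi : seqZ -> seqZ) : Prop := Phi sone = sone.

Definition is_idempotent (Phi : seqZ -> seqZ) : Prop :=
  forall v, bounded v -> Phi (Phi v) = Phi v.

Definition is_completely_positive (Phi : seqZ -> seqZ) : Prop :=
  forall (n : nat) (A : 'I_n -> 'I_n -> seqZ),
    mx_positive A -> mx_positive (fun i j => Phi (A i j)).

Definition is_Z_equivariant (Phi : seqZ -> seqZ) : Prop :=
  forall v, bounded v -> Phi (bshift v) = bshift (Phi v).

Definition range_linf (Phi : seqZ -> seqZ) : seqZ -> Prop :=
  fun w => exists v, bounded v /\ w = Phi v.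

End Linf.

(* For an ultrafilter p on Z, the map v |-> (n |-> p-lim_m v (n + m)) is a unital
   *-homomorphism of l^oo(Z) commuting with the shift, and composing the maps of
   p and q gives the map of the sum p + q in the semigroup βZ.  In the closed
   subsemigroup of ultrafilters containing every 2^k Z choose a minimal left
   ideal L; by the Ellis-Numakura lemma L contains idempotents p and q
   concentrated on the integers of even, resp. odd, 2-adic valuation, and
   minimality of L gives p + q = p and q + p = q.  The average Phi of the two
   homomorphisms is then unital, completely positive, equivariant and
   idempotent.  For w = Phi (1_{even valuation}) we get w 0 = 1/2, whereas
   Phi (w^2) 0 = (1^2 + 0^2) / 2 = 1/2; so w^2, which would be fixed by Phi if it
   lay in the range, does not. *)

From mathcomp Require Import all_boot all_order all_algebra complex reals.
From mathcomp Require Import spectral sesquilinear.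
From mathcomp Require Import boolp classical_sets filter.
From mathcomp Require Import ring lra zify.
Set Implicit Arguments. Unset Strict Implicit. Unset Printing Implicit Defensive.
Import Order.TTheory GRing.Theory Num.Theory.
Local Open Scope classical_set_scope.
Local Open Scope ring_scope.

(** * Ultrafilters on Z and the semigroup βZ *)

(* Ultrafilters on [int] are the points of the Stone-Cech compactification
   bZ; a filter [F] stands for the closed set [ultra_ext F] of bZ, and [uadd]
   is the extension of addition to bZ. *)
Definition is_filter (F : set (set int)) :=
  [/\ F setT, (forall A B, F A -> F B -> F (A `&` B)),
      (forall A B, A `<=` B -> F A -> F B) & ~ F set0].
Definition is_ultra (U : set (set int)) := is_filter U /\ forall A, U A \/ U (~` A).
Definition ultra_ext (F U : set (set int)) := is_ultra U /\ F `<=` U.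
Definition uadd (p q : set (set int)) : set (set int) :=
  [set A | p [set n | q [set m | A (n + m)]]].

Lemma ultra_ext_exists F : is_filter F -> exists U, ultra_ext F U.
Proof.
case=> FT FI FS F0.
have PF : ProperFilter F.
  apply: Build_ProperFilter_ex; last by split => // A B AB; exact: FS.
  move=> A FA; apply: contrapT => nA; apply: F0; apply: FS FA => x Ax.
  by apply: nA; exists x.
have [G [UG FG]] := ultraFilterLemma PF.
exists G; split=> //; split; last by move=> A; exact: in_ultra_setVsetC.
split; [exact: filterT | by move=> A B; exact: filterI |
        by move=> A B AB; exact: filterS |].
by move=> G0; have [x []] := filter_ex G0.
Qed.

Section Ultrafilter.
Variable U : set (set int).
Hypothesis hU : is_ultra U.

Lemma ultraT : U setT. Proof. by case: hU => -[]. Qed.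
Lemma ultraI A B : U A -> U B -> U (A `&` B). Proof. by case: hU => -[_ I _ _] _; apply: I. Qed.
Lemma ultraS A B : U A -> A `<=` B -> U B. Proof. by case: hU => -[_ _ S _] _ UA /S; apply. Qed.
Lemma ultra0 : ~ U set0. Proof. by case: hU => -[]. Qed.

Lemma ultra_meet A B : U A -> U B -> exists x, A x /\ B x.
Proof.
move=> UA UB; apply: contrapT => nAB; apply: ultra0.
by apply: (ultraS (ultraI UA UB)) => x [Ax Bx]; apply: nAB; exists x.
Qed.

Lemma ultraN A : U A -> ~ U (~` A).
Proof. by move=> UA /(ultra_meet UA) [x []]. Qed.

Lemma ultraNN A : ~ U A -> U (~` A).
Proof. by case: hU => _ /(_ A) []. Qed.

End Ultrafilter.

Lemma ultra_sub_eq p q : is_ultra p -> is_ultra q -> p `<=` q -> p = q.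
Proof.
move=> hp hq pq; apply/funext => A; apply/propext; split; first exact: pq.
move=> qA; apply: contrapT => /(ultraNN hp) /pq; exact: ultraN.
Qed.

Lemma ultra_ext_sub F G x : F `<=` G -> ultra_ext G x -> ultra_ext F x.
Proof. by move=> FG [hx Gx]; split=> // A /FG /Gx. Qed.

Lemma uadd_ultra p q : is_ultra p -> is_ultra q -> is_ultra (uadd p q).
Proof.
move=> hp hq; rewrite /uadd; split; [split|] => /=.
- by apply: (ultraS hp (ultraT hp)) => n _; exact: ultraT.
- move=> A B pA pB; apply: (ultraS hp (ultraI hp pA pB)) => n [qA qB].
  by apply: (ultraS hq (ultraI hq qA qB)) => m [].
- by move=> A B AB pA; apply: (ultraS hp pA) => n qA; apply: (ultraS hq qA) => m /AB.
- by move=> p0; apply: (ultra0 hp); apply: (ultraS hp p0) => n /(ultra0 hq).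
- move=> A; have [pA|pNA] := proj2 hp [set n | q [set m | A (n + m)]]; [left|right] => //.
  by apply: (ultraS hp pNA) => n /(ultraNN hq).
Qed.

Lemma uaddA p q r : uadd (uadd p q) r = uadd p (uadd q r).
Proof.
rewrite /uadd; apply/funext => A /=; congr p; apply/funext => n /=; congr q.
by apply/funext => m /=; congr r; apply/funext => k /=; rewrite addrA.
Qed.

Definition meet_closed (G : set (set int)) :=
  G setT /\ forall A B, G A -> G B -> G (A `&` B).

Lemma filter_meet_closed F : is_filter F -> meet_closed F.
Proof. by case. Qed.

Definition join (F G : set (set int)) : set (set int) :=
  [set B | exists X Y, [/\ F X, G Y & X `&` Y `<=` B]].

Lemma join_filter F G : is_filter F -> meet_closed G ->
  (forall X Y, F X -> G Y -> exists n, X n /\ Y n) -> is_filter (join F G).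
Proof.
case=> FT FI _ _ [GT GI] FG; split.
- by exists setT, setT.
- move=> B1 B2 [X1 [Y1 [F1 G1 s1]]] [X2 [Y2 [F2 G2 s2]]].
  exists (X1 `&` X2), (Y1 `&` Y2); split; [exact: FI | exact: GI |].
  by move=> n [[? ?] [? ?]]; split; [apply: s1 | apply: s2].
- move=> B1 B2 sB [X [Y [FX GY s]]]; exists X, Y; split => //.
  exact: subset_trans sB.
- by move=> [X [Y [FX GY s]]]; have [n XYn] := FG _ _ FX GY; exact: (s n).
Qed.

Lemma ultra_ext_join F G x : F setT -> G setT ->
  ultra_ext (join F G) x <-> ultra_ext F x /\ ultra_ext G x.
Proof.
move=> FT GT; split.
  move=> [hx Jx]; split; split=> // X ? ; apply: Jx.
    by exists X, setT; split.
  by exists setT, X; split.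
move=> [[hx Fx] [_ Gx]]; split=> // B [X [Y [FX GY s]]].
by apply: (ultraS hx (ultraI hx (Fx _ FX) (Gx _ GY))) => n /s.
Qed.

Lemma join_filter_common F G : is_filter F -> meet_closed G ->
  (exists z, ultra_ext F z /\ ultra_ext G z) -> is_filter (join F G).
Proof.
move=> hF hG [z [[hz Fz] [_ Gz]]]; apply: join_filter => // X Y /Fz zX /Gz zY.
exact: ultra_meet zX zY.
Qed.

Definition radd_fiber (x z : set (set int)) : set (set int) :=
  [set B | exists2 A, z A & [set n | x [set m | A (n + m)]] `<=` B].

Lemma radd_fiber_meet_closed x z : is_ultra x -> is_ultra z -> meet_closed (radd_fiber x z).
Proof.
move=> hx hz; split; first by exists setT => //; exact: ultraT.
move=> B1 B2 [A1 z1 s1] [A2 z2 s2]; exists (A1 `&` A2); first exact: ultraI.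
by move=> n xn; split; [apply: s1 | apply: s2]; apply: (ultraS hx xn) => m [].
Qed.

Lemma ultra_ext_radd_fiber x y z : is_ultra x -> is_ultra y -> is_ultra z ->
  ultra_ext (radd_fiber x z) y <-> uadd y x = z.
Proof.
move=> hx hy hz; split.
  move=> [_ yF]; apply/esym/ultra_sub_eq => //; first exact: uadd_ultra.
  by move=> A zA; apply: yF; exists A.
by move=> <-; split=> // B [A yxA s]; apply: (ultraS hy _ s).
Qed.

Definition radd_image (F x : set (set int)) : set (set int) :=
  [set A | forall y, ultra_ext F y -> uadd y x A].

Lemma radd_image_filter F x : is_filter F -> is_ultra x -> is_filter (radd_image F x).
Proof.
move=> hF hx; have [y0 Fy0] := ultra_ext_exists hF.
have hyx y : ultra_ext F y -> is_ultra (uadd y x) by move=> [hy _]; exact: uadd_ultra.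
split.
- by move=> y /hyx /ultraT.
- by move=> A B FA FB y Fy; exact: (ultraI (hyx _ Fy) (FA _ Fy) (FB _ Fy)).
- by move=> A B AB FA y Fy; exact: (ultraS (hyx _ Fy) (FA _ Fy) AB).
- by move=> /(_ y0 Fy0); apply: ultra0; exact: hyx.
Qed.

Lemma radd_image_ultra_ext F x y : is_ultra x -> ultra_ext F y ->
  ultra_ext (radd_image F x) (uadd y x).
Proof. by move=> hx Fy; split=> [|A]; [exact: uadd_ultra (proj1 Fy) hx | apply]. Qed.

(* The image of a closed set under the continuous map [y |-> y + x] is closed. *)
Lemma ultra_ext_radd_image F x z : is_filter F -> is_ultra x ->
  ultra_ext (radd_image F x) z -> exists y, ultra_ext F y /\ uadd y x = z.
Proof.
move=> hF hx [hz Iz].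
have hJ : is_filter (join F (radd_fiber x z)).
  apply: join_filter => //; first exact: radd_fiber_meet_closed.
  move=> X B FX [A zA sA]; apply: contrapT => nXB.
  apply: (ultraN hz zA); apply: Iz => y [hy Fy].
  apply: (ultraS hy (Fy _ FX)) => n Xn; apply: (ultraNN hx) => xA.
  by apply: nXB; exists n; split; last exact: sA.
have [y /ultra_ext_join [||Fy /(ultra_ext_radd_fiber hx _ hz) yx]] := ultra_ext_exists hJ.
- by case: hF.
- by case: (radd_fiber_meet_closed hx hz).
by exists y; split; last by apply: yx; case: Fy.
Qed.

(** * Idempotents in minimal left ideals *)

Definition left_ideal (H F : set (set int)) :=
  forall x y, ultra_ext H x -> ultra_ext F y -> ultra_ext F (uadd x y).

Lemma maximal_left_ideal_filter (S : set (set int) -> set (set int)) F0 :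
  (forall F G, F `<=` G -> S F `<=` S G) ->
  is_filter F0 -> left_ideal (S F0) F0 ->
  exists F, [/\ is_filter F, left_ideal (S F) F, F0 `<=` F &
    forall G, is_filter G -> left_ideal (S G) G -> F `<=` G -> G `<=` F].
Proof.
move=> S_mono hF0 LF0.
pose good G := [/\ is_filter G, left_ideal (S G) G & F0 `<=` G].
(* [set0] is admitted as the union of the empty chain. *)
have [|F [[Fe|[hF LF F0F]] Fmax]] := @Zorn_bigcup _ [set G | G = set0 \/ good G].
- move=> C CP Ctot.
  have [[G0 CG0 [[G0T _ _ _] _ F0G0]]|nog] := pselect (exists2 G, C G & good G); last first.
    left; apply/seteqP; split => // A [G CG GA].
    by case: (CP _ CG) => [Ge|gG]; [rewrite Ge in GA | exfalso; apply: nog; exists G].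
  have goodC G A : C G -> G A -> good G.
    by move=> CG GA; case: (CP _ CG) => // Ge; rewrite Ge in GA.
  right; split; [split|move=> x y Sx [hy Cy]; split|].
  + by exists G0.
  + move=> A B [G1 C1 A1] [G2 C2 B2].
    have [[[_ I1 _ _] _ _] [[_ I2 _ _] _ _]] := (goodC _ _ C1 A1, goodC _ _ C2 B2).
    have [s12|s21] := Ctot _ _ C1 C2.
      by exists G2 => //; apply: I2 => //; exact: s12.
    by exists G1 => //; apply: I1 => //; exact: s21.
  + move=> A B AB [G CG GA]; exists G => //.
    by have [[_ _ SG _] _ _] := goodC _ _ CG GA; exact: SG GA.
  + by move=> [G CG Ge]; have [[]] := goodC _ _ CG Ge.
  + exact: uadd_ultra (proj1 Sx) hy.
  + move=> A [G CG GA]; have [_ LG _] := goodC _ _ CG GA.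
    have SGx : ultra_ext (S G) x.
      by apply: ultra_ext_sub Sx; apply: S_mono => B GB; exists G.
    by have [_] := LG _ _ SGx (conj hy (fun B GB => Cy B (ex_intro2 _ _ G CG GB))); apply.
  + by move=> A /F0G0 G0A; exists G0.
- have [F0T _ _ _] := hF0.
  have /Fmax : F `<` F0 by rewrite Fe; split=> [A []|/(_ _ F0T)].
  by case; right; split.
- exists F; split => // G hG LG FG; apply: contrapT => nGF.
  by apply: (Fmax G); [split | right; split => //; exact: subset_trans FG].
Qed.

(* Ellis-Numakura: a minimal closed subsemigroup [F] is [F + x] for any of its
   points [x], and also equals the stabiliser [{y in F | y + x = x}]; thus
   [x + x = x]. *)
Lemma left_ideal_idempotent F0 : is_filter F0 -> left_ideal F0 F0 ->
  exists e, ultra_ext F0 e /\ uadd e e = e.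
Proof.
move=> hF0 LF0.
have [F [hF LF F0F Fmax]] := maximal_left_ideal_filter (fun _ _ => id) hF0 LF0.
have [x Fx] := ultra_ext_exists hF; have hx := proj1 Fx.
have [FT _ _ _] := hF.
have LG : left_ideal (radd_image F x) (radd_image F x).
  move=> z1 z2 /(ultra_ext_radd_image hF hx) [y1 [Fy1 <-]].
  move=> /(ultra_ext_radd_image hF hx) [y2 [Fy2 <-]].
  by rewrite -uaddA; apply: radd_image_ultra_ext => //; exact: LF (LF _ _ Fy1 Fx) Fy2.
have FG : F `<=` radd_image F x by move=> A FA y /(LF _ _)/(_ Fx) [_]; apply.
have GF := Fmax _ (radd_image_filter hF hx) LG FG.
have [y0 [Fy0 y0x]] := ultra_ext_radd_image hF hx (ultra_ext_sub GF Fx).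
pose K := join F (radd_fiber x x).
have hfib := radd_fiber_meet_closed hx hx.
have K_ext y : ultra_ext K y <-> ultra_ext F y /\ uadd y x = x.
  rewrite ultra_ext_join //; last by case: hfib.
  by split=> -[Fy yx]; split=> //; apply/(ultra_ext_radd_fiber hx (proj1 Fy) hx).
have hK : is_filter K.
  apply: join_filter_common => //; exists y0; split => //.
  exact/(ultra_ext_radd_fiber hx (proj1 Fy0) hx).
have LK : left_ideal K K.
  move=> z1 z2 /K_ext [Fz1 e1] /K_ext [Fz2 e2]; apply/K_ext; split; first exact: LF.
  by rewrite uaddA e2 e1.
have FK : F `<=` K by move=> A FA; exists A, setT; split => //; case: hfib.
have /K_ext [_ xx] := ultra_ext_sub (Fmax _ hK LK FK) Fx.
by exists x; split => //; exact: ultra_ext_sub F0F Fx.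
Qed.

Lemma minimal_left_ideal_absorb H L p q :
  is_filter H -> left_ideal H H -> left_ideal H L ->
  (forall G, is_filter G -> left_ideal H G -> L `<=` G -> G `<=` L) ->
  ultra_ext L p -> ultra_ext L q -> uadd p p = p -> uadd q p = q.
Proof.
move=> hH LH LL Lmin Lp Lq pp; have hp := proj1 Lp.
have LG : left_ideal H (radd_image H p).
  move=> x z Hx /(ultra_ext_radd_image hH hp) [y [Hy <-]].
  by rewrite -uaddA; apply: radd_image_ultra_ext => //; exact: LH.
have LsubG : L `<=` radd_image H p by move=> A LA y /(LL _ _)/(_ Lp) [_]; apply.
have Gq := ultra_ext_sub (Lmin _ (radd_image_filter hH hp) LG LsubG) Lq.
by have [y [_ <-]] := ultra_ext_radd_image hH hp Gq; rewrite uaddA pp.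
Qed.

(** * Ultrafilters concentrated on 2-adic classes *)

Definition pow2Z (k : nat) : set int := [set m | exists s : int, m = 2 ^+ k * s].
Definition val2_class (b : nat) : set int :=
  [set n | exists (a : nat) (t : int), n = 2 ^+ (a.*2 + b) * (2 * t + 1)].
Definition pow2_filter : set (set int) := [set B | exists k, pow2Z k `<=` B].
Definition val2_filter (b : nat) : set (set int) :=
  [set B | exists k, val2_class b `&` pow2Z k `<=` B].

Lemma pow2Z_le k l : (k <= l)%N -> pow2Z l `<=` pow2Z k.
Proof. by move=> kl m [s ->]; exists (2 ^+ (l - k) * s); rewrite mulrA -exprD subnKC. Qed.

Lemma pow2ZD k n m : pow2Z k n -> pow2Z k m -> pow2Z k (n + m).
Proof. by move=> [s ->] [t ->]; exists (s + t); rewrite mulrDr. Qed.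

Lemma val2_classD b n : val2_class b n -> exists j, forall m, pow2Z j m -> val2_class b (n + m).
Proof.
move=> [a [t ->]]; exists (a.*2 + b).+1 => m [s ->].
by exists a, (t + s); rewrite exprS; ring.
Qed.

Lemma val2_class_pow2Z b k : (val2_class b `&` pow2Z k) (2 ^+ (k.*2 + b)).
Proof.
split; first by exists k, 0; rewrite mulr0 add0r mulr1.
by exists (2 ^+ (k + b)); rewrite -exprD -addnn addnA.
Qed.

Lemma val2_unique (i j : nat) (t s : int) :
  2 ^+ i * (2 * t + 1) = 2 ^+ j * (2 * s + 1) :> int -> i = j.
Proof.
wlog ij : i j t s / (i <= j)%N.
  by move=> W e; case: (leqP i j) => h; [exact: W e | apply/esym/(W j i s t); [exact: ltnW|]].
move=> e; have : 2 * t + 1 = 2 ^+ (j - i) * (2 * s + 1) :> int.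
  apply: (@mulfI _ (2 ^+ i)); first by rewrite expf_neq0.
  by rewrite e mulrA -exprD subnKC.
case: (j - i)%N (subnKC ij) => [|d]; first by rewrite addn0.
by rewrite exprS -mulrA; move: (2 ^+ d * _) => X _; lia.
Qed.

Lemma val2_class_disjoint n : val2_class 0 n -> ~ val2_class 1 n.
Proof.
move=> [a [t ->]] [c [s /val2_unique]]; rewrite addn0 addn1.
by move=> /(congr1 odd); rewrite odd_double /= odd_double.
Qed.

Lemma pow2_filter_filter : is_filter pow2_filter.
Proof.
split.
- by exists 0%N.
- move=> A B [k kA] [l lB]; exists (maxn k l) => m mkl; split.
    by apply/kA/(pow2Z_le (leq_maxl k l)).
  by apply/lB/(pow2Z_le (leq_maxr k l)).
- by move=> A B AB [k kA]; exists k; exact: subset_trans AB.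
- by move=> [k /(_ 0)]; apply; exists 0; rewrite mulr0.
Qed.

Lemma val2_filter_filter b : is_filter (val2_filter b).
Proof.
split.
- by exists 0%N.
- move=> A B [k kA] [l lB]; exists (maxn k l) => m [bm mkl]; split.
    by apply: kA; split => //; exact: pow2Z_le (leq_maxl k l) _ mkl.
  by apply: lB; split => //; exact: pow2Z_le (leq_maxr k l) _ mkl.
- by move=> A B AB [k kA]; exists k; exact: subset_trans AB.
- by move=> [k /(_ _ (val2_class_pow2Z b k))].
Qed.

Lemma pow2_filter_pow2Z k : pow2_filter (pow2Z k).
Proof. by exists k. Qed.

Lemma val2_filter_pow2Z b k : val2_filter b (val2_class b `&` pow2Z k).
Proof. by exists k. Qed.

Lemma pow2_sub_val2_filter b : pow2_filter `<=` val2_filter b.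
Proof. by move=> B [k kB]; exists k => m [_ /kB]. Qed.

Lemma pow2_left_ideal : left_ideal pow2_filter pow2_filter.
Proof.
move=> x y [hx Hx] [hy Hy]; split=> [|B [k kB]]; first exact: uadd_ultra.
apply: (ultraS hx (Hx _ (pow2_filter_pow2Z k))) => n nk.
apply: (ultraS hy (Hy _ (pow2_filter_pow2Z k))) => m mk.
exact/kB/pow2ZD.
Qed.

Lemma val2_filter_right_stable b x y :
  ultra_ext (val2_filter b) x -> ultra_ext pow2_filter y -> ultra_ext (val2_filter b) (uadd x y).
Proof.
move=> [hx Ax] [hy Hy]; split=> [|B [k kB]]; first exact: uadd_ultra.
apply: (ultraS hx (Ax _ (val2_filter_pow2Z b k))) => n [/val2_classD [j hj] nk].
apply: (ultraS hy (ultraI hy (Hy _ (pow2_filter_pow2Z j)) (Hy _ (pow2_filter_pow2Z k)))).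
by move=> m [mj mk]; apply: kB; split; [exact: hj | exact: pow2ZD].
Qed.

Lemma idempotent_pair_exists : exists p q,
  [/\ is_ultra p, is_ultra q, p (val2_class 0), q (val2_class 1) &
      [/\ uadd p p = p, uadd q q = q, uadd p q = p & uadd q p = q]].
Proof.
have [L [hL LL HL Lmin]] := maximal_left_ideal_filter (S := fun _ => pow2_filter)
  (fun _ _ _ _ => id) pow2_filter_filter pow2_left_ideal.
have idem b : exists e, [/\ ultra_ext L e, e (val2_class b) & uadd e e = e].
  have hA := val2_filter_filter b.
  have J_ext y : ultra_ext (join L (val2_filter b)) y <->
                 ultra_ext L y /\ ultra_ext (val2_filter b) y.
    by apply: ultra_ext_join; [case: hL | case: hA].
  have hJ : is_filter (join L (val2_filter b)).
    apply: join_filter_common => //; first exact: filter_meet_closed.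
    have [c Ac] := ultra_ext_exists hA; have [l Ll] := ultra_ext_exists hL.
    exists (uadd c l); split; first exact: LL (ultra_ext_sub (pow2_sub_val2_filter b) Ac) Ll.
    exact: val2_filter_right_stable Ac (ultra_ext_sub HL Ll).
  have LJ : left_ideal (join L (val2_filter b)) (join L (val2_filter b)).
    move=> x y /J_ext [Lx Ax] /J_ext [Ly Ay]; apply/J_ext; split.
      exact: LL (ultra_ext_sub (pow2_sub_val2_filter b) Ax) Ly.
    exact: val2_filter_right_stable Ax (ultra_ext_sub HL Ly).
  have [e [/J_ext [Le [_ Ae]] ee]] := left_ideal_idempotent hJ LJ.
  by exists e; split => //; apply: Ae; exists 0%N => m [].
have [p [Lp p0 pp]] := idem 0%N; have [q [Lq q1 qq]] := idem 1%N.
have absorb := minimal_left_ideal_absorb pow2_filter_filter pow2_left_ideal LL Lmin.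
exists p, q; split => //; [exact: proj1 Lp | exact: proj1 Lq | split => //].
- exact: absorb Lq Lp qq.
- exact: absorb Lp Lq pp.
Qed.

(** * Limits along an ultrafilter *)

Section RealUltraLimit.
Variable R : realType.
Implicit Types (U : set (set int)) (g h : int -> R).

Definition ucvg U g (a : R) := forall e : R, 0 < e -> U [set m | `|g m - a| < e].

Lemma eq_ucvg U g h a : g =1 h -> ucvg U g a -> ucvg U h a.
Proof. by move=> /funext ->. Qed.

Lemma ucvg_unique U g a b : is_ultra U -> ucvg U g a -> ucvg U g b -> a = b.
Proof.
move=> hU ga gb; apply: contrapT => /eqP nab.
have e0 : 0 < `|a - b| / 2 by rewrite divr_gt0 // normr_gt0 subr_eq0.
have [m [/= m1 m2]] := ultra_meet hU (ga _ e0) (gb _ e0).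
have : `|a - b| <= `|g m - a| + `|g m - b|.
  by rewrite -(normrN (g m - a)) (le_trans _ (ler_normD _ _)) // opprB addrA subrK.
lra.
Qed.

Lemma ucvg_exists U g M : is_ultra U -> (forall m, `|g m| <= M) -> exists a, ucvg U g a.
Proof.
move=> hU gM; pose S := [set x : R | U [set m | x <= g m]].
have SM : S (- M).
  by apply: (ultraS hU (ultraT hU)) => m _ /=; have := gM m; rewrite ler_norml => /andP[].
have Sub : ubound S M.
  move=> x Sx; rewrite leNgt; apply/negP => Mx; apply: (ultra0 hU).
  apply: (ultraS hU Sx) => m /= xm; have := gM m; rewrite ler_norml => /andP[_ gm]; lra.
have hS : has_sup S by split; [exists (- M) | exists M].
exists (sup S) => e e0; have e2 : 0 < e / 2 by rewrite divr_gt0.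
have [x Sx xs] := sup_adherent e2 hS.
have nS : ~ S (sup S + e / 2) by move=> /(sup_upper_bound hS); lra.
apply: (ultraS hU (ultraI hU Sx (ultraNN hU nS))) => m [/= xm /negP].
by rewrite -ltNge => gm; rewrite ltr_norml; apply/andP; split; lra.
Qed.

Lemma ucvg_norm_le U g a M : is_ultra U -> ucvg U g a -> (forall m, `|g m| <= M) -> `|a| <= M.
Proof.
move=> hU ga gM; rewrite leNgt; apply/negP => aM.
have e0 : 0 < `|a| - M by rewrite subr_gt0.
have [m [m1 _]] := ultra_meet hU (ga _ e0) (ultraT hU); move: m1 => /= m1.
have : `|a| <= `|g m| + `|g m - a|.
  by rewrite -(normrN (g m - a)) (le_trans _ (ler_normD _ _)) // opprB addrC subrK.
by have := gM m; lra.
Qed.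

Lemma ucvg_near_cst U g (A : set int) c : is_ultra U -> U A -> (forall m, A m -> g m = c) ->
  ucvg U g c.
Proof. by move=> hU UA gA e e0; apply: (ultraS hU UA) => m /gA /= ->; rewrite subrr normr0. Qed.

Lemma ucvg_cst U c : is_ultra U -> ucvg U (fun _ => c) c.
Proof. by move=> hU; apply: ucvg_near_cst (ultraT hU) _. Qed.

Lemma ucvgN U g a : ucvg U g a -> ucvg U (fun m => - g m) (- a).
Proof. by move=> ga e /ga; congr U; apply/funext => m /=; rewrite -opprD normrN. Qed.

Lemma ucvgD U g h a b : is_ultra U -> ucvg U g a -> ucvg U h b ->
  ucvg U (fun m => g m + h m) (a + b).
Proof.
move=> hU ga hb e e0; have e2 : 0 < e / 2 by rewrite divr_gt0.
apply: (ultraS hU (ultraI hU (ga _ e2) (hb _ e2))) => m [/= m1 m2].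
have : `|g m + h m - (a + b)| <= `|g m - a| + `|h m - b|.
  by rewrite (le_trans _ (ler_normD _ _)) // addrACA opprD.
lra.
Qed.

Lemma ucvgM U g h a b : is_ultra U -> ucvg U g a -> ucvg U h b ->
  ucvg U (fun m => g m * h m) (a * b).
Proof.
move=> hU ga hb e e0.
have s0 : 0 < `|a| + `|b| + 1 by have := normr_ge0 a; have := normr_ge0 b; lra.
pose d := e / 2 / (`|a| + `|b| + 1).
have d0 : 0 < d by rewrite !divr_gt0.
have ed : d * (`|a| + `|b| + 1) = e / 2 by rewrite /d divfK // gt_eqF.
apply: (ultraS hU (ultraI hU (ultraI hU (ga _ ltr01) (ga _ d0)) (hb _ d0))).
move=> m [[/= m1 m2] m3].
have tri : `|g m * h m - a * b| <= `|g m| * `|h m - b| + `|b| * `|g m - a|.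
  have -> : g m * h m - a * b = g m * (h m - b) + b * (g m - a) by ring.
  by rewrite (le_trans (ler_normD _ _)) // !normrM.
have ga1 : `|g m| <= `|a| + `|g m - a|.
  by rewrite (le_trans _ (ler_normD _ _)) // addrC subrK.
have p1 : `|g m| * `|h m - b| <= (`|a| + 1) * d by apply: ler_pM => //; lra.
have p2 : `|b| * `|g m - a| <= `|b| * d by apply: ler_pM => //; lra.
have := normr_ge0 b; lra.
Qed.

Lemma ucvg_uadd p q g h a : is_ultra p -> is_ultra q ->
  (forall n, ucvg q (fun m => g (n + m)) (h n)) -> ucvg p h a -> ucvg (uadd p q) g a.
Proof.
move=> hp hq gh ha e e0; have e2 : 0 < e / 2 by rewrite divr_gt0.
apply: (ultraS hp (ha _ e2)) => n /= n1; apply: (ultraS hq (gh n _ e2)) => m /= m1.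
have : `|g (n + m) - a| <= `|g (n + m) - h n| + `|h n - a|.
  by rewrite (le_trans _ (ler_normD _ _)) // addrA subrK.
lra.
Qed.

End RealUltraLimit.

Section ComplexUltraLimit.
Variable R : realType.
Local Notation C := (R[i])%C.
Local Notation Re := complex.Re.
Local Notation Im := complex.Im.
Implicit Types (U : set (set int)) (f g : int -> C).

Lemma ReD (x y : C) : Re (x + y) = Re x + Re y. Proof. by case: x; case: y. Qed.
Lemma ImD (x y : C) : Im (x + y) = Im x + Im y. Proof. by case: x; case: y. Qed.
Lemma ReM (x y : C) : Re (x * y) = Re x * Re y - Im x * Im y. Proof. by case: x; case: y. Qed.
Lemma ImM (x y : C) : Im (x * y) = Re x * Im y + Im x * Re y. Proof. by case: x; case: y. Qed.
Lemma ReJ (x : C) : Re (conjc x) = Re x. Proof. by case: x. Qed.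
Lemma ImJ (x : C) : Im (conjc x) = - Im x. Proof. by case: x. Qed.

Lemma normc_ReIm_le (x : C) M : `|x| <= (M%:C)%C -> `|Re x| <= M /\ `|Im x| <= M.
Proof.
rewrite normc_def lecR => h; split; apply: le_trans h;
  rewrite -sqrtr_sqr ler_wsqrtr //; [rewrite lerDl | rewrite lerDr]; exact: sqr_ge0.
Qed.

Lemma normc_le_ReIm (x : C) M : `|Re x| <= M -> `|Im x| <= M -> `|x| <= ((M + M)%:C)%C.
Proof.
move=> hr hi; rewrite normc_def lecR.
have M0 : 0 <= M by exact: le_trans (normr_ge0 _) hr.
rewrite -(ger0_norm (addr_ge0 M0 M0)) -sqrtr_sqr ler_wsqrtr //.
by move: hr hi; rewrite !ler_norml => /andP[r1 r2] /andP[i1 i2]; rewrite !expr2; nra.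
Qed.

Definition ucvgC U f (z : C) :=
  ucvg U (fun m => Re (f m)) (Re z) /\ ucvg U (fun m => Im (f m)) (Im z).

(* Junk value [0] for a real or imaginary part that has no limit. *)
Definition ulimC U f : C :=
  Complex (xget 0 (ucvg U (fun m => Re (f m)))) (xget 0 (ucvg U (fun m => Im (f m)))).

Lemma ulimC_eq U f z : is_ultra U -> ucvgC U f z -> ulimC U f = z.
Proof.
move=> hU [hr hi]; case: z hr hi => a b /= hr hi.
by rewrite /ulimC; congr Complex; [exact: ucvg_unique hU (xgetI 0 hr) hr |
  exact: ucvg_unique hU (xgetI 0 hi) hi].
Qed.

Lemma ulimC_ucvgC U f : is_ultra U -> bounded f -> ucvgC U f (ulimC U f).
Proof.
move=> hU [M fM]; split; apply: xgetPex; apply: (ucvg_exists (M := M)) hU _ => m.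
  exact: (normc_ReIm_le (fM m)).1.
exact: (normc_ReIm_le (fM m)).2.
Qed.

Lemma ulimC_norm_le U f M : is_ultra U -> (forall n, `|f n| <= (M%:C)%C) ->
  `|ulimC U f| <= ((M + M)%:C)%C.
Proof.
move=> hU fM; have [hr hi] := ulimC_ucvgC hU (ex_intro _ M fM).
apply: normc_le_ReIm.
  by apply: (ucvg_norm_le hU hr) => m; exact: (normc_ReIm_le (fM m)).1.
by apply: (ucvg_norm_le hU hi) => m; exact: (normc_ReIm_le (fM m)).2.
Qed.

Section Algebra.
Context {U : set (set int)} (hU : is_ultra U).

Lemma ucvgC_cst (c : C) : ucvgC U (fun _ => c) c.
Proof. by split; exact: ucvg_cst. Qed.

Lemma ucvgCD f g a b : ucvgC U f a -> ucvgC U g b -> ucvgC U (fun m => f m + g m) (a + b).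
Proof.
move=> [fr fi] [gr gi]; split.
  by rewrite ReD; apply: eq_ucvg (ucvgD hU fr gr) => m; rewrite ReD.
by rewrite ImD; apply: eq_ucvg (ucvgD hU fi gi) => m; rewrite ImD.
Qed.

Lemma ucvgCM f g a b : ucvgC U f a -> ucvgC U g b -> ucvgC U (fun m => f m * g m) (a * b).
Proof.
move=> [fr fi] [gr gi]; split.
  rewrite ReM; apply: eq_ucvg (ucvgD hU (ucvgM hU fr gr) (ucvgN (ucvgM hU fi gi))) => m.
  by rewrite ReM.
by rewrite ImM; apply: eq_ucvg (ucvgD hU (ucvgM hU fr gi) (ucvgM hU fi gr)) => m; rewrite ImM.
Qed.

Lemma ucvgCJ f a : ucvgC U f a -> ucvgC U (fun m => conjc (f m)) (conjc a).
Proof.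
move=> [fr fi]; split; first by rewrite ReJ; apply: eq_ucvg fr => m; rewrite ReJ.
by rewrite ImJ; apply: eq_ucvg (ucvgN fi) => m; rewrite ImJ.
Qed.

End Algebra.
End ComplexUltraLimit.

(** * The action of βZ on bounded sequences *)

Section UltraAction.
Variable R : realType.
Local Notation C := (R[i])%C.
Local Notation seqZ := (seqZ R).

Lemma boundedD (u v : seqZ) : bounded u -> bounded v -> bounded (sadd u v).
Proof.
move=> [M uM] [N vN]; exists (M + N) => n; rewrite /sadd raddfD /=.
exact: le_trans (ler_normD _ _) (lerD (uM n) (vN n)).
Qed.

Lemma boundedM (u v : seqZ) : bounded u -> bounded v -> bounded (smul u v).
Proof.
move=> [M uM] [N vN]; exists (M * N) => n; rewrite /smul normrM rmorphM /=.
by apply: ler_pM => //; rewrite normr_ge0.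
Qed.

Lemma boundedZ a (v : seqZ) : bounded v -> bounded (sscale a v).
Proof.
move=> [M vM]; exists (complex.Re `|a| * M) => n; rewrite /sscale normrM rmorphM /=.
have -> : ((complex.Re `|a|)%:C)%C = `|a| by rewrite normc_def.
by apply: ler_pM => //; rewrite normr_ge0.
Qed.

Lemma boundedJ (v : seqZ) : bounded v -> bounded (sstar v).
Proof.
move=> [M vM]; exists M => n; rewrite /sstar.
by move: (vM n); case: (v n) => a b; rewrite !normc_def /= sqrrN.
Qed.

Lemma bounded_sum n (F : 'I_n -> seqZ) : (forall l, bounded (F l)) ->
  bounded (fun k => \sum_(l < n) F l k).
Proof.
elim: n F => [|n IH] F bF; first by exists 0 => k; rewrite big_ord0 normr0.
have [M hM] := boundedD (IH (fun l => F (widen_ord (leqnSn n) l)) (fun l => bF _)) (bF ord_max).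
by exists M => k; rewrite big_ord_recr; exact: hM.
Qed.

Definition uact U (v : seqZ) : seqZ := fun n => ulimC U (fun m => v (n + m)).

Lemma uact_ucvgC U (v : seqZ) n : is_ultra U -> bounded v ->
  ucvgC U (fun m => v (n + m)) (uact U v n).
Proof. by move=> hU [M vM]; apply: ulimC_ucvgC => //; exists M => m; exact: vM. Qed.

Lemma uact_bounded U (v : seqZ) : is_ultra U -> bounded v -> bounded (uact U v).
Proof. by move=> hU [M vM]; exists (M + M) => n; apply: ulimC_norm_le => // m; exact: vM. Qed.

Lemma uact_bshift U (v : seqZ) : uact U (bshift v) = bshift (uact U v).
Proof.
by apply/funext => n; rewrite /uact /bshift; congr ulimC; apply/funext => m; rewrite addrAC.
Qed.

Lemma uact_uadd p q (v : seqZ) : is_ultra p -> is_ultra q -> bounded v ->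
  uact p (uact q v) = uact (uadd p q) v.
Proof.
move=> hp hq bv; apply/funext => n; symmetry.
apply: ulimC_eq (uadd_ultra hp hq) _.
have [outer_re outer_im] := uact_ucvgC n hp (uact_bounded hq bv).
have inner m := uact_ucvgC (n + m) hq bv.
split; [apply: (ucvg_uadd hp hq _ outer_re) | apply: (ucvg_uadd hp hq _ outer_im)] => m.
  by have [+ _] := inner m; apply: eq_ucvg => k; rewrite addrA.
by have [_ +] := inner m; apply: eq_ucvg => k; rewrite addrA.
Qed.

Section Homomorphism.
Context {U : set (set int)} (hU : is_ultra U).

Lemma uact_cst (c : C) : uact U (fun _ => c) = fun _ => c.
Proof. by apply/funext => n; apply: ulimC_eq hU (ucvgC_cst hU c). Qed.

Lemma uactD (u v : seqZ) : bounded u -> bounded v -> uact U (sadd u v) = sadd (uact U u) (uact U v).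
Proof.
move=> bu bv; apply/funext => n; apply: ulimC_eq hU _.
exact: (ucvgCD hU (uact_ucvgC n hU bu) (uact_ucvgC n hU bv)).
Qed.

Lemma uactM (u v : seqZ) : bounded u -> bounded v -> uact U (smul u v) = smul (uact U u) (uact U v).
Proof.
move=> bu bv; apply/funext => n; apply: ulimC_eq hU _.
exact: (ucvgCM hU (uact_ucvgC n hU bu) (uact_ucvgC n hU bv)).
Qed.

Lemma uactZ a (v : seqZ) : bounded v -> uact U (sscale a v) = sscale a (uact U v).
Proof.
move=> bv; apply/funext => n; rewrite /sstar; apply: ulimC_eq hU _.
exact: (ucvgCM hU (ucvgC_cst hU a) (uact_ucvgC n hU bv)).
Qed.

Lemma uactJ (v : seqZ) : bounded v -> uact U (sstar v) = sstar (uact U v).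
Proof.
move=> bv; apply/funext => n; rewrite /sstar; apply: ulimC_eq hU _.
exact: (ucvgCJ (uact_ucvgC n hU bv)).
Qed.

Lemma uact_sum n (F : 'I_n -> seqZ) : (forall l, bounded (F l)) ->
  uact U (fun k => \sum_(l < n) F l k) = fun k => \sum_(l < n) uact U (F l) k.
Proof.
move=> bF; apply/funext => k; apply: ulimC_eq hU _.
elim: n F bF => [|n IH] F bF.
  by under eq_fun do rewrite big_ord0; rewrite big_ord0; exact: ucvgC_cst.
under eq_fun do rewrite big_ord_recr /=; rewrite big_ord_recr /=.
exact: (ucvgCD hU (IH _ (fun l => bF _)) (uact_ucvgC k hU (bF _))).
Qed.

End Homomorphism.
End UltraAction.

(** * Complete positivity *)

Lemma gram_trmx_mul_coisometry (F : numClosedFieldType) m n (K : 'M[F]_n) (S : 'M[F]_(n, m)) :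
  (S *m S ^t* = 1%:M)%sesqui ->
  (((K *m S)^T) ^t* *m (K *m S)^T = (K^T) ^t* *m K^T)%sesqui.
Proof.
move=> uS; rewrite !trmxK map_mxM trmx_mul -!mulmxA; congr (_ *m _); rewrite mulmxA.
have -> : ((S ^ Num.Def.conjC)%sesqui *m S^T = 1%:M).
  by have := congr1 trmx uS; rewrite trmx_mul trmx1 map_trmx trmxK.
by rewrite mul1mx.
Qed.

(* Stack [X] over [Y] and factor the transpose of this 2n x n matrix through
   the n orthonormal rows that Gram-Schmidt produces for its row space. *)
Lemma gram_add (F : numClosedFieldType) n (X Y : 'M[F]_n) :
  exists Z : 'M[F]_n, (Z ^t* *m Z = X ^t* *m X + Y ^t* *m Y)%sesqui.
Proof.
pose W : 'M[F]_(n + n, n) := col_mx X Y.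
pose S := schmidt W^T.
have uS : (S *m S ^t* = 1%:M)%sesqui.
  by apply/unitarymxP; apply: schmidt_unitarymx; rewrite leq_addr.
pose K := W^T *m pinvmx S.
have eW : K *m S = W^T by apply: mulmxKpV; exact: schmidt_sub.
exists K^T.
have -> : (X ^t* *m X + Y ^t* *m Y = W ^t* *m W)%sesqui.
  by rewrite /W tr_col_mx map_row_mx mul_row_col.
by rewrite -[W]trmxK -eW gram_trmx_mul_coisometry.
Qed.

Section Positivity.
Variable R : realType.
Local Notation C := (R[i])%C.
Local Notation seqZ := (seqZ R).

Lemma conjc_mul_self (z : C) :
  conjc z * z = ((complex.Re z ^+ 2 + complex.Im z ^+ 2)%:C)%C.
Proof. by case: z => a b; apply/eqP; rewrite eq_complex /=; apply/andP; split; apply/eqP; ring. Qed.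

Lemma gram_mean n (X Y : 'I_n -> 'I_n -> C) : exists Z : 'I_n -> 'I_n -> C,
  forall i j, (\sum_(l < n) conjc (X l i) * X l j + \sum_(l < n) conjc (Y l i) * Y l j) / 2 =
    \sum_(l < n) conjc (Z l i) * Z l j.
Proof.
pose c : C := ((Num.sqrt (2^-1 : R))%:C)%C.
have cc : conjc c * c = 2^-1.
  rewrite conjc_real -rmorphM /= -expr2 sqr_sqrtr ?invr_ge0 ?ler0n //.
  by rewrite rmorphV ?unitfE ?pnatr_eq0 //= rmorph_nat.
have [Z eZ] := gram_add (\matrix_(l, j) (c * X l j)) (\matrix_(l, j) (c * Y l j)).
exists (fun l j => Z l j) => i j.
symmetry; transitivity ((Z ^t* *m Z)%sesqui i j).
  by rewrite !mxE; apply: eq_bigr => l _; rewrite !mxE.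
rewrite eZ !mxE mulrDl !mulr_suml.
by congr (_ + _); apply: eq_bigr => l _; rewrite !mxE rmorphM /= -cc; ring.
Qed.

(* The factors are bounded because [|Z l j|^2 <= A j j k]. *)
Lemma mx_positive_pointwise n (A : 'I_n -> 'I_n -> seqZ) :
  (forall i, bounded (A i i)) ->
  (forall k, exists Z : 'I_n -> 'I_n -> C,
     forall i j, A i j k = \sum_(l < n) conjc (Z l i) * Z l j) ->
  mx_positive A.
Proof.
move=> bA /choice [Z hZ]; exists (fun l j k => Z k l j); split=> [l j|//].
have [M hM] := bA j; exists (1 + M) => k; have := hM k; rewrite hZ.
pose sq (z : C) := complex.Re z ^+ 2 + complex.Im z ^+ 2.
have sq_ge0 z : 0 <= sq z by rewrite addr_ge0 // sqr_ge0.
rewrite (eq_bigr (fun i => (sq (Z k i j))%:C%C)) => [|i _]; last exact: conjc_mul_self.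
rewrite -rmorph_sum normc_def /= expr0n /= addr0 sqrtr_sqr lecR ger0_norm ?sumr_ge0 // => sM.
have zs : sq (Z k l j) <= M.
  by rewrite (le_trans _ sM) // (bigD1 l) //= lerDl sumr_ge0.
rewrite normc_def lecR; have := sq_ge0 (Z k l j).
have := sqr_sqrtr (sq_ge0 (Z k l j)); have := sqrtr_ge0 (sq (Z k l j)).
move: zs; move: (sq _) (Num.sqrt _) => t r; rewrite expr2; nra.
Qed.

Lemma uact_gram U n (B : 'I_n -> 'I_n -> seqZ) i j k :
  is_ultra U -> (forall i j, bounded (B i j)) ->
  uact U (fun k => \sum_(l < n) conjc (B l i k) * B l j k) k =
  \sum_(l < n) conjc (uact U (B l i) k) * uact U (B l j) k.
Proof.
move=> hU bB; have bBB l : bounded (smul (sstar (B l i)) (B l j)).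
  by apply: boundedM; [apply: boundedJ|].
rewrite (uact_sum hU (F := fun l => smul (sstar (B l i)) (B l j))) //.
by apply: eq_bigr => l _; rewrite uactM ?uactJ //; exact: boundedJ.
Qed.

End Positivity.

(** * The averaged action *)

Section Construction.
Variable R : realType.
Local Notation C := (R[i])%C.
Local Notation seqZ := (seqZ R).

Definition indic (A : set int) : seqZ := fun n => if `[< A n >] then 1 else 0.

Lemma indic_bounded A : bounded (indic A).
Proof.
by exists 1 => n; rewrite /indic; case: asboolP => _; rewrite ?normr1 ?normr0 rmorph1.
Qed.

Lemma uact_near_cst U (v : seqZ) (B : set int) c : is_ultra U -> U B ->
  (forall m, B m -> v m = c) -> uact U v 0 = c.
Proof.
move=> hU UB vB; apply: (ulimC_eq hU).
by split; apply: (ucvg_near_cst hU UB) => m /vB; rewrite add0r => ->.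
Qed.

Variables (p q : set (set int)).
Hypotheses (hp : is_ultra p) (hq : is_ultra q).

Definition uact_mean (v : seqZ) : seqZ := sscale 2^-1 (sadd (uact p v) (uact q v)).

Lemma uact_mean_bounded : maps_linf uact_mean.
Proof. by move=> v bv; apply/boundedZ/boundedD; exact: uact_bounded. Qed.

Lemma uact_mean_linear : is_linear_linf uact_mean.
Proof.
move=> a u v bu bv; have bau := boundedZ a bu.
rewrite /uact_mean !uactD // !uactZ //; apply/funext => n; rewrite /sscale /sadd; ring.
Qed.

Lemma uact_mean_unital : is_unital uact_mean.
Proof. by rewrite /is_unital /uact_mean /sone !uact_cst //; apply/funext => n; rewrite /sscale /sadd; field. Qed.

Lemma uact_mean_bshift : is_Z_equivariant uact_mean.
Proof. by move=> v bv; rewrite /uact_mean !uact_bshift. Qed.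

Lemma uact_mean_cp : is_completely_positive uact_mean.
Proof.
move=> n A [B [bB eA]].
have {}eA i j : A i j = fun k => \sum_(l < n) conjc (B l i k) * B l j k.
  by apply/funext => k; exact: eA.
apply: mx_positive_pointwise => [i|k].
  rewrite eA; apply/uact_mean_bounded/(bounded_sum (F := fun l => smul (sstar (B l i)) (B l i))).
  by move=> l; apply/boundedM/bB; exact: boundedJ.
have [Z hZ] := gram_mean (fun l j => uact p (B l j) k) (fun l j => uact q (B l j) k).
by exists Z => i j; rewrite -hZ eA /uact_mean /sscale /sadd !uact_gram // mulrC.
Qed.

Lemma uact_uact_mean r v : is_ultra r -> uadd r p = r -> uadd r q = r -> bounded v ->
  uact r (uact_mean v) = uact r v.
Proof.
move=> hr rp rq bv; have bp := uact_bounded hp bv; have bq := uact_bounded hq bv.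
rewrite /uact_mean (uactZ hr); last exact: boundedD.
rewrite (uactD hr) // !uact_uadd // rp rq.
by apply/funext => n; rewrite /sscale /sadd; field.
Qed.

Hypotheses (pp : uadd p p = p) (qq : uadd q q = q) (pq : uadd p q = p) (qp : uadd q p = q).

Lemma uact_mean_idem : is_idempotent uact_mean.
Proof. by move=> v bv; rewrite {1}/uact_mean !uact_uact_mean. Qed.

Hypotheses (p0 : p (val2_class 0)) (q1 : q (val2_class 1)).

Lemma uact_mean_range_not_mul_closed :
  ~ (forall u v, range_linf uact_mean u -> range_linf uact_mean v ->
       range_linf uact_mean (smul u v)).
Proof.
pose v := indic (val2_class 0); pose w := uact_mean v.
have bv : bounded v := indic_bounded _.
have rw : range_linf uact_mean w by exists v.
have wp : uact p w = uact p v := uact_uact_mean hp pp pq bv.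
have wq : uact q w = uact q v := uact_uact_mean hq qp qq bv.
have vp : uact p v 0 = 1.
  by apply: (uact_near_cst hp p0) => m Am; rewrite /v /indic asboolT.
have vq : uact q v 0 = 0.
  apply: (uact_near_cst hq q1) => m Am; rewrite /v /indic asboolF //.
  by move=> /val2_class_disjoint.
have w0 : w 0 = 2^-1 by rewrite /w /uact_mean /sscale /sadd vp vq addr0 mulr1.
have bw : bounded w := uact_mean_bounded bv.
clearbody w => /(_ w w rw rw) [u [bu ww]].
have := congr1 (fun f => f 0) (uact_mean_idem bu).
rewrite -ww /uact_mean /sscale /sadd !uactM // wp wq /smul vp vq w0 mulr1 mulr0 addr0.
have h2 : (2^-1 : C) != 0 by rewrite invr_eq0 pnatr_eq0.
by move=> /(mulfI h2) /eqP; rewrite eq_sym invr_eq1 pnatr_eq1.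
Qed.

End Construction.

Theorem theorem2p15 (R : realType) :
  exists Phi : seqZ R -> seqZ R,
    maps_linf Phi /\ is_linear_linf Phi /\ is_unital Phi /\
    is_completely_positive Phi /\ is_idempotent Phi /\
    is_Z_equivariant Phi /\
    ~ is_Cstar_subalgebra (range_linf Phi).
Proof.
have [p [q [hp hq p0 q1 [pp qq pq qp]]]] := idempotent_pair_exists.
exists (@uact_mean R p q); do ![split].
- exact: uact_mean_bounded.
- exact: uact_mean_linear.
- exact: uact_mean_unital.
- exact: uact_mean_cp.
- exact: uact_mean_idem.
- exact: uact_mean_bshift.
- by case=> _ [_ [_ [_ [mul_closed _]]]]; exact: uact_mean_range_not_mul_closed mul_closed.
Qed.
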